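(* An infinite binary overlap-free word $\mathbf{x}$ is $2$-automatic if and only if its code $(i_j)_{j\ge1}$ is ultimately periodic.
   Context: $\Sigma=\{0,1\}$. An overlap is a word $axaxa$ with $a\in\Sigma$, $x\in\Sigma^*$; a word is overlap-free if it has no overlap as a factor. $\mathcal{O}$ is the set of right-infinite binary overlap-free words, $\mu$ is the morphism $0\mapsto01$, $1\mapsto10$. Let $p_0=\epsilon$, $p_1=0$, $p_2=00$, $p_3=1$, $p_4=11$. The code of $\mathbf{x}\in\mathcal{O}$ is the unique sequence $(i_j)_{j\ge1}$ over $\{0,1,2,3,4\}$ for which there exist $\mathbf{y}_0=\mathbf{x},\mathbf{y}_1,\mathbf{y}_2,\ldots\in\mathcal{O}$ with $\mathbf{y}_{j-1}=p_{i_j}\mu(\mathbf{y}_j)$ for all $j\ge1$ (existence and uniqueness follow from the Restivo–Salemi factorization: each $\mathbf{x}\in\mathcal{O}$ is uniquely $p\mu(\mathbf{y})$ with $p\in\{p_0,\dots,p_4\}$, $\mathbf{y}\in\mathcal{O}$). An infinite word $(a_n)_{n\ge0}$ is $2$-automatic if there is a deterministic finite automaton with output which, on input the base-2 representation of $n$, outputs $a_n$ (equivalently, its $2$-kernel $\{(a_{2^e n+i})_{n\ge0}: e\ge0,0\le i<2^e\}$ is finite). *)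

(* Binary alphabet {0,1} is encoded as bool: 0 = false, 1 = true. *)
From mathcomp Require Import all_boot.
Set Implicit Arguments. Unset Strict Implicit. Unset Printing Implicit Defensive.

Definition iword := nat -> bool.

Definition factor (w : iword) (i n : nat) : seq bool := mkseq (fun k => w (i + k)) n.

Definition overlap (a : bool) (x : seq bool) : seq bool := a :: x ++ a :: x ++ [:: a].

Definition overlap_free (w : iword) : Prop :=
  forall (i : nat) (a : bool) (x : seq bool),
    factor w i (size (overlap a x)) <> overlap a x.

(* The Thue--Morse morphism mu : 0 -> 01, 1 -> 10, applied to an infinite word. *)
Definition mu (y : iword) : iword :=
  fun n => if odd n then ~~ y n./2 else y n./2.

Definition prepend (p : seq bool) (w : iword) : iword :=
  fun n => if n < size p then nth false p n else w (n - size p).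

Definition pword (i : nat) : seq bool :=
  match i with
  | 0 => [::]
  | 1 => [:: false]
  | 2 => [:: false; false]
  | 3 => [:: true]
  | _ => [:: true; true]
  end.

(* c is the code of x (only the entries c j, j >= 1, matter): there are
   overlap-free y_0 = x, y_1, y_2, ... with y_{j-1} = p_{c j} mu(y_j) for j >= 1. *)
Definition is_code (x : iword) (c : nat -> nat) : Prop :=
  (forall j, 1 <= j -> c j <= 4) /\
  exists y : nat -> iword,
    (forall n, y 0 n = x n) /\
    (forall j, overlap_free (y j)) /\
    (forall j, 1 <= j -> forall n, y j.-1 n = prepend (pword (c j)) (mu (y j)) n).

Definition ult_periodic (c : nat -> nat) : Prop :=
  exists N p, 0 < p /\ forall j, N <= j -> c (j + p) = c j.

(* Base-2 representation of n, most significant digit first, no leading zeros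
   (the representation of 0 is the empty word); digit 1 = true. *)
Fixpoint bits_lsb (fuel n : nat) : seq bool :=
  match fuel with
  | 0 => [::]
  | f.+1 => if n == 0 then [::] else odd n :: bits_lsb f n./2
  end.
Definition base2 (n : nat) : seq bool := rev (bits_lsb n n).

Definition automatic2 (a : iword) : Prop :=
  exists (Q : finType) (q0 : Q) (delta : Q -> bool -> Q) (out : Q -> bool),
    forall n, out (foldl delta q0 (base2 n)) = a n.

From mathcomp Require Import all_boot zify.
From Stdlib Require Import Classical ClassicalEpsilon.
Set Implicit Arguments. Unset Strict Implicit. Unset Printing Implicit Defensive.

(* By the Restivo-Salemi factorization, which is unique, the code (c_j) of x comes with
   overlap-free words y_0 = x, y_j = p_(c_(j+1)) mu(y_(j+1)); unwinding, y_e is the subsequence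
   n |-> x (2^e n + o_e) of the 2-kernel of x, for an offset o_e < 2^(e+1).
   If x is computed by an automaton, y_e is determined by finitely many data (the action of the
   e low-order digits of o_e on the states, the top digit of o_e and the first letter of y_e), so
   y_e = y_e' for some e < e', and by uniqueness the code is periodic from e+1 on.
   Conversely, if the code is ultimately periodic then so is (y_j), and every subsequence
   n |-> x (2^e n + i) is one of finitely many y_j, shifted by at most two letters and possibly
   complemented, so the 2-kernel of x is finite. *)

Lemma ovf_no_aaa w i : overlap_free w -> w i = w i.+1 -> w i.+1 != w i.+2.
Proof.
move=> hw; have := hw i (w i) [::]; rewrite /factor /mkseq /= !addnS !addn0.
by case: (w i); case: (w i.+1); case: (w i.+2).
Qed.

Lemma ovf_no_ababa w i : overlap_free w ->
  w i != w i.+1 -> w i.+1 != w i.+2 -> w i.+2 != w i.+3 -> w i.+3 = w i.+4.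
Proof.
move=> hw; have := hw i (w i) [:: w i.+1]; rewrite /factor /mkseq /= !addnS !addn0.
by case: (w i); case: (w i.+1); case: (w i.+2); case: (w i.+3); case: (w i.+4).
Qed.

Lemma negb_of_neq (u v : bool) : u != v -> u = ~~ v.
Proof. by case: u; case: v. Qed.

Lemma ovf_no_pairs_gap3 w i : overlap_free w -> 0 < i -> w i = w i.+1 -> w i.+3 != w i.+4.
Proof.
case: i => // i hw _ E12; apply/negP => /eqP E45.
have E0 : w i = ~~ w i.+2.
  apply: negb_of_neq; apply/eqP => E.
  by move: (ovf_no_aaa hw (etrans E (esym E12))); rewrite E12 eqxx.
have E3 : w i.+3 = ~~ w i.+2 by apply: negb_of_neq; rewrite eq_sym ovf_no_aaa.
have E4 : w i.+4 = w i.+2.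
  apply/eqP; apply: contraT => /negb_of_neq N4.
  by move: (ovf_no_aaa hw (etrans E3 (esym N4))); rewrite E45 eqxx.
have E6 : w i.+4.+2 = ~~ w i.+2 by rewrite -E4 E45; apply: negb_of_neq; rewrite eq_sym ovf_no_aaa.
apply: (hw i (~~ w i.+2) [:: w i.+2; w i.+2]).
by rewrite /factor /mkseq /= !addnS !addn0 E0 E12 E3 E4 -E45 E4 E6.
Qed.

Lemma ovf_next_pair w i : overlap_free w -> 0 < i -> w i = w i.+1 ->
  w i.+2 = w i.+3 \/ w i.+4 = w i.+4.+1.
Proof.
move=> hw i_gt0 Ei.
case: (eqVneq (w i.+2) (w i.+3)) => [|N23]; [by left | right].
exact: ovf_no_ababa hw (ovf_no_aaa hw Ei) N23 (ovf_no_pairs_gap3 hw i_gt0 Ei).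
Qed.

Lemma ovf_pairs_even_gap w i j : overlap_free w -> 0 < i -> w i = w i.+1 ->
  w (i + j) = w (i + j).+1 -> ~~ odd j.
Proof.
move=> hw; elim/ltn_ind: j i => j IH i i_gt0 Ei.
case: j IH => [|[|[|[|[|j]]]]] IH Eij //.
- by move: (ovf_no_aaa hw Ei); rewrite addn1 in Eij; rewrite Eij eqxx.
- by move: (ovf_no_pairs_gap3 hw i_gt0 Ei); rewrite !addnS addn0 in Eij; rewrite Eij eqxx.
case: (ovf_next_pair hw i_gt0 Ei) => [E2|E4].
- move: Eij; have -> : i + j.+1.+4 = i.+2 + j.+3 by lia.
  by move=> /(IH j.+3 ltac:(lia) i.+2 isT E2) /=; rewrite !negbK.
- move: Eij; have -> : i + j.+1.+4 = i.+4 + j.+1 by lia.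
  by move=> /(IH j.+1 ltac:(lia) i.+4 isT E4) /=; rewrite !negbK.
Qed.

Lemma ovf_pairs_parity w i k : overlap_free w -> 0 < i -> 0 < k ->
  w i = w i.+1 -> w k = w k.+1 -> odd i = odd k.
Proof.
move=> hw; wlog le_ik : i k / i <= k => [hwlog i_gt0 k_gt0 Ei Ek|].
  by case: (leqP i k) => [|/ltnW] h; [|symmetry]; apply: hwlog.
move=> i_gt0 _ Ei Ek; have := ovf_pairs_even_gap (j := k - i) hw i_gt0 Ei.
rewrite subnKC // => /(_ Ek) /negbTE even_ki.
by rewrite -[k in RHS](subnKC le_ik) oddD even_ki addbF.
Qed.

(** * The Restivo-Salemi factorization *)

Lemma factor_cons w i n : factor w i n.+1 = w i :: factor w i.+1 n.
Proof.
rewrite /factor /mkseq /= addn0 -[1]addn0 iotaDl -map_comp; congr (_ :: _).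
by apply: eq_map => k /=; rewrite addnA addn1.
Qed.

Lemma factor_take w i m n : m <= n -> factor w i m = take m (factor w i n).
Proof.
elim: m i n => [|m IH] i [|n] // le_mn.
by rewrite !factor_cons /= (IH _ n).
Qed.

Definition mu_seq (s : seq bool) : seq bool := flatten [seq [:: b; ~~ b] | b <- s].

Lemma mu_seq_cons b s : mu_seq (b :: s) = b :: ~~ b :: mu_seq s.
Proof. by []. Qed.

Lemma mu_seq_cat s t : mu_seq (s ++ t) = mu_seq s ++ mu_seq t.
Proof. by rewrite /mu_seq map_cat flatten_cat. Qed.

Lemma size_mu_seq s : size (mu_seq s) = (size s).*2.
Proof. by elim: s => //= b s IH; rewrite IH doubleS. Qed.

Lemma mu_seq_overlap a s : mu_seq (overlap a s) = overlap a (~~ a :: mu_seq s) ++ [:: ~~ a].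
Proof. by rewrite /overlap !(mu_seq_cons, mu_seq_cat) /= -!catA /= -!catA. Qed.

Lemma mu_even z k : mu z k.*2 = z k.
Proof. by rewrite /mu odd_double doubleK. Qed.

Lemma mu_odd z k : mu z k.*2.+1 = ~~ z k.
Proof. by rewrite /mu /= odd_double uphalf_double. Qed.

Lemma factor_mu w l z : (forall n, w (l + n) = mu z n) ->
  forall i n, factor w (l + i.*2) n.*2 = mu_seq (factor z i n).
Proof.
move=> wE i n; elim: n i => [|n IH] i //.
rewrite doubleS !factor_cons -!addnS -doubleS IH !wE.
by rewrite mu_even mu_odd.
Qed.

Lemma ovf_mu_preimage w l z : overlap_free w -> (forall n, w (l + n) = mu z n) ->
  overlap_free z.
Proof.
move=> hw wE i a s zE; apply: (hw (l + i.*2) a (~~ a :: mu_seq s)).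
have le_size : size (overlap a (~~ a :: mu_seq s)) <= (size (overlap a s)).*2.
  by rewrite -size_mu_seq mu_seq_overlap size_cat leq_addr.
by rewrite (factor_take _ _ le_size) (factor_mu wE) zE mu_seq_overlap take_size_cat.
Qed.

Definition factorizes (w : iword) (a : nat) (z : iword) : Prop :=
  a <= 4 /\ overlap_free z /\ forall n, w n = prepend (pword a) (mu z) n.

Lemma size_pword a : size (pword a) <= 2.
Proof. by case: a => [|[|[|[|a]]]]. Qed.

Lemma prepend_size_add p v k : prepend p v (size p + k) = v k.
Proof. by rewrite /prepend ltnNge leq_addr /= addKn. Qed.

Lemma eq_prepend w p v : (forall n, n < size p -> w n = nth false p n) ->
  (forall n, w (size p + n) = v n) -> forall n, w n = prepend p v n.
Proof.
move=> wp wv n; rewrite /prepend; case: ltnP => [|le_pn]; first exact: wp.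
by rewrite -wv subnKC.
Qed.

Lemma mu_of_alternating w l : (forall k, w (l + k.*2).+1 = ~~ w (l + k.*2)) ->
  forall n, w (l + n) = mu (fun k => w (l + k.*2)) n.
Proof.
move=> alt n; rewrite -[n]odd_double_half; case: (odd n).
- by rewrite add1n mu_odd addnS alt.
- by rewrite add0n mu_even.
Qed.

Lemma factorizes_of_alternating w a : a <= 4 -> overlap_free w ->
  (forall n, n < size (pword a) -> w n = nth false (pword a) n) ->
  (forall k, w (size (pword a) + k.*2).+1 = ~~ w (size (pword a) + k.*2)) ->
  exists z, factorizes w a z.
Proof.
move=> a_le4 hw wp alt; have wmu := mu_of_alternating alt.
exists (fun k => w (size (pword a) + k.*2)); split=> //; split.
- exact: ovf_mu_preimage hw wmu.
- exact: eq_prepend.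
Qed.

Lemma ovf_has_pair w : overlap_free w -> exists2 i, 0 < i & w i = w i.+1.
Proof.
move=> hw; case: (eqVneq (w 1) (w 2)) => [|N1]; first by exists 1.
case: (eqVneq (w 2) (w 3)) => [|N2]; first by exists 2.
case: (eqVneq (w 3) (w 4)) => [|N3]; first by exists 3.
by exists 4 => //; apply: ovf_no_ababa hw N1 N2 N3.
Qed.

Lemma ovf_factorization w : overlap_free w -> exists a z, factorizes w a z.
Proof.
move=> hw; have [i0 i0_gt0 Ei0] := ovf_has_pair hw.
have alt k : 0 < k -> odd k != odd i0 -> w k.+1 = ~~ w k.
  move=> k_gt0 Nk; apply: negb_of_neq; rewrite eq_sym; apply: contra Nk => /eqP Ek.
  by apply/eqP; apply: ovf_pairs_parity hw k_gt0 i0_gt0 Ek Ei0.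
case: (boolP (odd i0)) => odd_i0; last first.
  exists (if w 0 then 3 else 1); apply: factorizes_of_alternating => //; first by case: (w 0).
    have -> : pword (if w 0 then 3 else 1) = [:: w 0] by case: (w 0).
    by case.
  have -> : size (pword (if w 0 then 3 else 1)) = 1 by case: (w 0).
  by move=> k; apply: alt; rewrite // oddD odd_double.
case: (eqVneq (w 0) (w 1)) => [E01|N01].
  exists (if w 0 then 4 else 2); apply: factorizes_of_alternating => //; first by case: (w 0).
    have -> : pword (if w 0 then 4 else 2) = [:: w 0; w 0] by case: (w 0).
    by case=> [|[|n]] //= _; rewrite E01.
  have -> : size (pword (if w 0 then 4 else 2)) = 2 by case: (w 0).
  move=> k; rewrite add2n -doubleS; apply: alt; by rewrite ?double_gt0 // odd_double odd_i0.
exists 0; apply: factorizes_of_alternating => // -[|k] /=; first by rewrite (negb_of_neq N01) negbK.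
by apply: alt; rewrite ?double_gt0 // odd_double odd_i0.
Qed.

Lemma ovf_prepend_mu_parity w p p' z z' : overlap_free w -> size p <= 2 -> size p' <= 2 ->
  (forall n, w n = prepend p (mu z) n) -> (forall n, w n = prepend p' (mu z') n) ->
  odd (size p) = odd (size p').
Proof.
move=> hw sp sp' wE wE'; apply/eqP; apply: contraT => Nodd.
have alt n : 2 <= n -> w n != w n.+1.
  move=> n_ge2.
  have [s [v [s_le2 odd_s sE]]] :
      exists s v, [/\ s <= 2, odd s = odd n & forall k, w (s + k) = mu v k].
    case: (eqVneq (odd (size p)) (odd n)) => [Ep|Np].
      by exists (size p), z; split=> // k; rewrite wE prepend_size_add.
    exists (size p'), z'; split=> [//||k]; last by rewrite wE' prepend_size_add.
    by move: Nodd Np; case: (odd (size p)); case: (odd (size p')); case: (odd n).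
  have le_sn : s <= n by apply: leq_trans s_le2 n_ge2.
  have even_ns : ~~ odd (n - s) by rewrite oddB // odd_s addbb.
  have -> : n = s + ((n - s)./2).*2.
    by move: (odd_double_half (n - s)); rewrite (negbTE even_ns) add0n => ->; rewrite subnKC.
  by rewrite -addnS !sE mu_odd mu_even; case: (v _).
by move: (alt 5 isT); rewrite (ovf_no_ababa hw (alt 2 isT) (alt 3 isT) (alt 4 isT)) eqxx.
Qed.

Lemma factorization_unique w a a' z z' : overlap_free w ->
  factorizes w a z -> factorizes w a' z' -> a = a' /\ z =1 z'.
Proof.
move=> hw [a_le4 [_ wE]] [a'_le4 [_ wE']].
suff ea : a = a'.
  split=> // k; subst a'.
  rewrite -(mu_even z) -(mu_even z') -(prepend_size_add (pword a) (mu z)).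
  by rewrite -wE wE' prepend_size_add.
have := ovf_prepend_mu_parity hw (size_pword a) (size_pword a') wE wE'.
(* Within each parity of [size (pword a)], the letters [w 0] and [w 1] determine [a]. *)
move: a_le4 a'_le4 (wE 0) (wE' 0) (wE 1) (wE' 1).
case: a {wE} => [|[|[|[|[|a]]]]] //; case: a' {wE'} => [|[|[|[|[|a']]]]] // _ _;
  rewrite /prepend /mu /=;
  by case: (z 0); case: (z' 0); case: (w 0); case: (w 1).
Qed.

(** * Automatic sequences with a finite 2-kernel *)

Lemma half_ltn n : 0 < n -> n./2 < n.
Proof. by move=> n_gt0; rewrite ltn_half_double; lia. Qed.

Lemma bits_lsb_fuel f1 f2 n : n <= f1 -> n <= f2 -> bits_lsb f1 n = bits_lsb f2 n.
Proof.
elim: f1 f2 n => [|f1 IH] [|f2] n //=; rewrite ?leqn0.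
- by move=> /eqP ->.
- by move=> _ /eqP ->.
case: (posnP n) => [-> //|n_gt0] le1 le2; congr (_ :: _).
by apply: IH; rewrite -ltnS; apply: leq_trans (half_ltn n_gt0) _.
Qed.

Lemma bits_lsb_half n : 0 < n -> bits_lsb n n = odd n :: bits_lsb n./2 n./2.
Proof.
case: n => // n _; rewrite [LHS]/=; congr (_ :: _).
by apply: bits_lsb_fuel => //; rewrite -ltnS (half_ltn (ltn0Sn n)).
Qed.

Lemma base2_rcons (b : bool) k : 0 < k -> base2 (b + k.*2) = rcons (base2 k) b.
Proof.
move=> k_gt0; rewrite /base2 bits_lsb_half ?half_bit_double; last by case: b; lia.
by rewrite rev_cons oddD odd_double addbF; case: b.
Qed.

Section FiniteKernel.

Variables (x : iword) (D : finType) (F : D -> iword).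
Hypothesis kernel_in_F :
  forall e i, i < 2 ^ e -> exists d, forall m, F d m = x (2 ^ e * m + i).

Definition kernel_index (d : D) : Prop :=
  exists e i, i < 2 ^ e /\ forall m, F d m = x (2 ^ e * m + i).

Lemma kernel_index_decimate d (b : bool) : kernel_index d ->
  exists d', kernel_index d' /\ forall m, F d' m = F d (b + m.*2).
Proof.
case=> e [i [lt_i Fd]].
have lt_i' : b * 2 ^ e + i < 2 ^ e.+1 by rewrite expnS; case: b; lia.
have [d' Fd'] := kernel_in_F lt_i'.
exists d'; split; first by exists e.+1, (b * 2 ^ e + i).
by move=> m; rewrite Fd' Fd expnS; congr x; lia.
Qed.

Definition kernel_step (d : D) (b : bool) : D :=
  epsilon (inhabits d) (fun d' => kernel_index d' /\ forall m, F d' m = F d (b + m.*2)).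

Lemma kernel_stepP d b : kernel_index d ->
  kernel_index (kernel_step d b) /\ forall m, F (kernel_step d b) m = F d (b + m.*2).
Proof. by move/(kernel_index_decimate b); apply: epsilon_spec. Qed.

Lemma kernel_step_bits n d : kernel_index d -> F (foldl kernel_step d (bits_lsb n n)) 0 = F d n.
Proof.
elim/ltn_ind: n d => n IH d kd; case: (posnP n) => [-> //|n_gt0].
have [kd' Fd'] := kernel_stepP (odd n) kd.
by rewrite bits_lsb_half //= IH ?half_ltn // Fd' odd_double_half.
Qed.

Lemma automatic2_of_kernel : automatic2 x.
Proof.
have [d0 Fd0] := kernel_in_F (e := 0) (i := 0) isT.
have kd0 : kernel_index d0 by exists 0, 0.
(* The steps consume the least significant digit first, whereas the automaton reads [base2 n]
   from the most significant one: its state is the composite of the steps read so far. *)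
pose delta (phi : {ffun D -> D}) b := [ffun d => phi (kernel_step d b)].
have run s phi : foldl delta phi (rev s) = [ffun d => phi (foldl kernel_step d s)].
  elim: s phi => [|b s IH] phi; first by apply/ffunP => d; rewrite !ffunE.
  by rewrite rev_cons foldl_rcons IH; apply/ffunP => d; rewrite !ffunE.
exists {ffun D -> D}, [ffun d => d], delta, (fun phi : {ffun D -> D} => F (phi d0) 0) => n.
by rewrite /base2 run !ffunE kernel_step_bits // Fd0 mul1n addn0.
Qed.

End FiniteKernel.

Definition desubst (c : nat -> nat) (y : nat -> iword) : Prop :=
  forall j n, y j n = prepend (pword (c j.+1)) (mu (y j.+1)) n.

Definition code_chain (c : nat -> nat) (y : nat -> iword) : Prop :=
  forall j, factorizes (y j) (c j.+1) (y j.+1).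

Lemma code_chain_desubst c y : code_chain c y -> desubst c y.
Proof. by move=> chain j; case: (chain j) => _ []. Qed.

Lemma is_code_chain x c : is_code x c ->
  exists y, [/\ y 0 =1 x, forall j, overlap_free (y j) & code_chain c y].
Proof.
case=> c_le4 [y [y0 [ovf yE]]]; exists y; split=> // j.
by split; [exact: c_le4 | split; [exact: ovf | exact: (yE j.+1)]].
Qed.

Fixpoint code_offset (c : nat -> nat) (e : nat) : nat :=
  if e is e'.+1 then code_offset c e' + 2 ^ e' * size (pword (c e)) else 0.

Lemma code_offset_lt c e : code_offset c e < 2 ^ e.+1.
Proof.
elim: e => [|e IH] //=; have := size_pword (c e.+1).
by rewrite [2 ^ e.+2]expnS [2 ^ e.+1]expnS in IH *; nia.
Qed.

Lemma desubst_offset x c y : y 0 =1 x -> desubst c y ->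
  forall e n, y e n = x (2 ^ e * n + code_offset c e).
Proof.
move=> y0 yE; elim=> [|e IH] n; first by rewrite y0 mul1n addn0.
rewrite -(mu_even (y e.+1)) -(prepend_size_add (pword (c e.+1))) -yE IH /= expnS.
by congr x; nia.
Qed.

Lemma bit_split e n : n < 2 ^ e.+1 -> n = (2 ^ e <= n) * 2 ^ e + n %% 2 ^ e.
Proof.
rewrite expnS mul2n -addnn => lt_n; case: leqP => [le_n|lt_n'] /=.
- by rewrite mul1n -{2}(subnK le_n) modnDr modn_small ?subnK //; lia.
- by rewrite mul0n modn_small.
Qed.

(** * Automatic words have ultimately periodic codes *)

Section Automaton.

Variables (Q : Type) (q0 : Q) (delta : Q -> bool -> Q).

Definition state (n : nat) : Q := foldl delta q0 (base2 n).

Fixpoint read_low (e i : nat) (q : Q) : Q :=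
  if e is e'.+1 then delta (read_low e' i./2 q) (odd i) else q.

Lemma state_bit (b : bool) k : 0 < k -> state (b + k.*2) = delta (state k) b.
Proof. by move=> k_gt0; rewrite /state base2_rcons // foldl_rcons. Qed.

Lemma state_low e i m : 0 < m -> i < 2 ^ e -> state (2 ^ e * m + i) = read_low e i (state m).
Proof.
elim: e i => [|e IH] i m_gt0 lt_i.
  by move: lt_i; rewrite ltnS leqn0 => /eqP ->; rewrite mul1n addn0.
have -> : 2 ^ e.+1 * m + i = odd i + (2 ^ e * m + i./2).*2.
  by rewrite -{1}(odd_double_half i) expnS; lia.
rewrite state_bit ?IH //= ?ltn_half_double -?mul2n -?expnS //.
by rewrite addn_gt0 muln_gt0 expn_gt0 m_gt0.
Qed.

End Automaton.

Lemma pigeonhole_nat (T : finType) (f : nat -> T) : exists i j, i < j /\ f i = f j.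
Proof.
have /injectivePn [i [j Nij Eij]] : ~~ injectiveb (fun k : 'I_#|T|.+1 => f k).
  by apply/negP => /injectiveP/leq_card; rewrite card_ord ltnn.
case: (ltngtP i j) => [lt_ij|lt_ji|/val_inj Eq]; [by exists i, j | by exists j, i |].
by rewrite Eq eqxx in Nij.
Qed.

Lemma automatic_desubst_repeat x c y : automatic2 x -> y 0 =1 x -> desubst c y ->
  exists e e', e < e' /\ y e =1 y e'.
Proof.
case=> Q [q0 [delta [out xE]]] y0 yE.
pose hi e := 2 ^ e <= code_offset c e.
pose lo e := code_offset c e %% 2 ^ e.
have yE' e n : 0 < n + hi e ->
    y e n = out (read_low delta e (lo e) (state q0 delta (n + hi e))).
  move=> pos; rewrite (desubst_offset y0 yE) [code_offset c e](bit_split (code_offset_lt c e)).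
  by rewrite -state_low ?ltn_pmod ?expn_gt0 // xE mulnDr addnA [hi e * _]mulnC.
pose data e : {ffun Q -> bool} * bool * bool :=
  ([ffun q => out (read_low delta e (lo e) q)], hi e, y e 0).
have [e [e' [lt_ee' [/ffunP Eout Ehi Ey0]]]] := pigeonhole_nat data.
exists e, e'; split=> // -[|n] //; rewrite !yE' ?addSn // -Ehi.
by move: (Eout (state q0 delta (n.+1 + hi e))); rewrite !ffunE.
Qed.

Lemma code_chain_periodic c y e e' : (forall j, overlap_free (y j)) -> code_chain c y ->
  e < e' -> y e =1 y e' -> ult_periodic c.
Proof.
move=> ovf chain lt_ee' Eee'.
have next k : y (e + k) =1 y (e' + k) ->
    c (e + k).+1 = c (e' + k).+1 /\ y (e + k).+1 =1 y (e' + k).+1.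
  move=> Ek; have [a_le4 [ovf' yE]] := chain (e' + k).
  apply: factorization_unique (ovf (e + k)) (chain (e + k)) _.
  by split=> //; split=> // n; rewrite Ek yE.
have shift k : y (e + k) =1 y (e' + k).
  by elim: k => [|k IH]; [rewrite !addn0 | rewrite !addnS; case: (next k IH)].
exists e.+1, (e' - e); split=> [|j le_j]; first by rewrite subn_gt0.
have [Ec _] := next (j.-1 - e) (shift _).
have E1 : (e + (j.-1 - e)).+1 = j by lia.
have E2 : (e' + (j.-1 - e)).+1 = j + (e' - e) by lia.
by rewrite E1 E2 in Ec.
Qed.

(** * Ultimately periodic codes give automatic words *)

Definition factorization (w : iword) : nat * iword :=
  epsilon (inhabits (0, w)) (fun p => factorizes w p.1 p.2).

Lemma factorizationP w : overlap_free w ->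
  factorizes w (factorization w).1 (factorization w).2.
Proof.
move=> /ovf_factorization [a [z fz]].
by apply: (epsilon_spec _ (fun p => factorizes w p.1 p.2)); exists (a, z).
Qed.

Lemma ovf_code_exists x : overlap_free x -> exists c, is_code x c.
Proof.
move=> hx; pose y j := iter j (fun w => (factorization w).2) x.
have ovf j : overlap_free (y j) by elim: j => [|j IH] //=; case: (factorizationP IH) => _ [].
exists (fun j => (factorization (y j.-1)).1); split.
  by case=> // j _; case: (factorizationP (ovf j)).
exists y; split=> //; split=> // -[|j] // _.
by case: (factorizationP (ovf j)) => _ [].
Qed.

Lemma desubst_head c y j : desubst c y ->
  y j 0 = if pword (c j.+1) is b :: _ then b else y j.+1 0.
Proof. by move=> yE; rewrite yE /prepend; case: (pword _). Qed.

Lemma desubst_periodic c y N p : desubst c y -> (forall j, N <= j -> c (j + p) = c j) ->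
  forall j, N <= j -> y j =1 y (j + p).
Proof.
move=> yE per.
have cS j : N <= j -> c (j + p).+1 = c j.+1 by move=> le_Nj; rewrite -addSn per // ltnW.
have head_step j : N <= j -> (pword (c j.+1) = [::] -> y j.+1 0 = y (j.+1 + p) 0) ->
    y j 0 = y (j + p) 0.
  move=> le_Nj IH; rewrite (desubst_head j yE) (desubst_head (j + p) yE) cS //.
  by case: (pword _) IH => [|b s] // ->; rewrite ?addSn.
have head j : N <= j -> y j 0 = y (j + p) 0.
  move=> le_Nj; case: (classic (exists d, pword (c (j + d).+1) != [::])) => [[d nz]|none].
    elim: d j le_Nj nz => [|d IH] j le_Nj nz; apply: head_step => // E.
      by rewrite addn0 E in nz.
    by apply: IH; rewrite ?addSnnS // ltnW.
  (* Otherwise no letter is ever prepended and all the [y (j + i)] share their first letter. *)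
  suff const i : y j 0 = y (j + i) 0 by [].
  elim: i => [|i IH]; first by rewrite addn0.
  rewrite IH (desubst_head _ yE) addnS; case E: (pword _) => [|b s] //.
  by case: none; exists i; rewrite E.
move=> j le_Nj n; elim/ltn_ind: n j le_Nj => n IH j le_Nj.
case: (posnP n) => [->|n_gt0]; first exact: head.
rewrite (yE j) (yE (j + p)) cS // /prepend; case: ltnP => // le_sn.
rewrite /mu -addSn (IH _ _ j.+1) //.
- by apply: leq_ltn_trans (half_ltn n_gt0); apply/half_leq/leq_subr.
- exact: leqW.
Qed.

Lemma desubst_finite_levels c y N p : desubst c y -> 0 < p ->
  (forall j, N <= j -> c (j + p) = c j) -> forall e, exists j : 'I_(N + p), y e =1 y j.
Proof.
move=> yE p_gt0 per e; case: (ltnP e N) => [lt_eN|le_Ne].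
  by exists (Ordinal (ltn_addr p lt_eN)).
have lt_r : N + (e - N) %% p < N + p by rewrite ltn_add2l ltn_pmod.
exists (Ordinal lt_r) => /=; set r := (e - N) %% p.
have -> : e = N + r + (e - N) %/ p * p by rewrite -addnA [r + _]addnC -divn_eq subnKC.
elim: (_ %/ p) => [|q IH] n; first by rewrite mul0n addn0.
by rewrite mulSn [p + _]addnC addnA -(desubst_periodic yE per) ?IH // -addnA leq_addr.
Qed.

Lemma split_double_bit d s (b : bool) : d <= 2 -> s <= 2 ->
  exists d' (b' : bool), d' <= 2 /\ d'.*2 + b = d + s + b'.
Proof.
move=> le_d le_s; have : d + s <= 4 by lia.
move: (d + s) => t le_t.
exists (if b then t./2 else uphalf t), (if b then ~~ odd t else odd t).
by case: t le_t => [|[|[|[|[|t]]]]] //; case: b.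
Qed.

Lemma desubst_kernel x c y : y 0 =1 x -> desubst c y ->
  forall e i, i < 2 ^ e -> exists d f, d <= 2 /\ forall m, x (2 ^ e * (m + d) + i) = y e m (+) f.
Proof.
move=> y0 yE; elim=> [|e IH] i lt_i.
  move: lt_i; rewrite ltnS leqn0 => /eqP ->.
  by exists 0, false; split=> // m; rewrite mul1n !addn0 y0 addbF.
have iE := bit_split lt_i; set hi := (2 ^ e <= i) in iE.
have [d [f [le_d xE]]] := IH (i %% 2 ^ e) (ltn_pmod _ (expn_gt0 2 e)).
have [d' [b' [le_d' dE]]] := split_double_bit hi le_d (size_pword (c e.+1)).
exists d', (b' (+) f); split=> // m.
have -> : 2 ^ e.+1 * (m + d') + i = 2 ^ e * (size (pword (c e.+1)) + (b' + m.*2) + d) + i %% 2 ^ e.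
  by rewrite {1}iE expnS; nia.
rewrite xE yE prepend_size_add /mu oddD odd_double addbF half_bit_double.
by case: (b'); case: (y e.+1 m); case: (f).
Qed.

Lemma automatic2_of_periodic_code x c : is_code x c -> ult_periodic c -> automatic2 x.
Proof.
move=> /is_code_chain [y [y0 _ /code_chain_desubst yE]] [N [p [p_gt0 per]]].
pose D := ('I_(N + p) * 'I_3 * bool * bool * bool)%type.
(* A kernel subsequence of [x] is some [y j], shifted by at most two letters and possibly
   complemented; the shifted-in letters are stored explicitly. *)
pose F (d : D) m := let: (j, s, f, b0, b1) := d in
  if m < s then (if m == 0 then b0 else b1) else y j (m - s) (+) f.
apply: (@automatic2_of_kernel x D F) => e i lt_i.
have [s [f [le_s xE]]] := desubst_kernel y0 yE lt_i.
have [j yj] := desubst_finite_levels yE p_gt0 per e.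
exists (j, inord s, f, x i, x (2 ^ e + i)) => m /=.
rewrite inordK ?ltnS //; case: ltnP => [lt_ms|le_sm].
- case: m lt_ms => [|[|m]] lt_ms /=; rewrite ?muln0 ?muln1 ?add0n //; lia.
- by rewrite -yj -xE subnK.
Qed.

Theorem theorem7 (x : iword) (hx : overlap_free x) :
  automatic2 x <-> (forall c : nat -> nat, is_code x c -> ult_periodic c).
Proof.
split=> [x_auto c /is_code_chain [y [y0 ovf chain]] | code_per].
- have [e [e' [lt_ee' Eee']]] := automatic_desubst_repeat x_auto y0 (code_chain_desubst chain).
  exact: code_chain_periodic ovf chain lt_ee' Eee'.
- have [c x_code] := ovf_code_exists hx.
  exact: automatic2_of_periodic_code x_code (code_per c x_code).
Qed.
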